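(* Let $n\ge 1$ and let $x_1,\dots,x_n$ be distinct integers, each greater than $1$, and let $D=\{1,x_1,\dots,x_n\}$. Then $diam(D)=2$ if $n=1$, $diam(D)=3$ if $n=2$, and $diam(D)=4$ if $n>2$.
   Context: A signed tree is a pair $(T,s)$ where $T$ is a finite tree and $s:E(T)\to\{+,-\}$. The signed degree $sdeg(v)$ of a vertex is the number of incident positive edges minus the number of incident negative edges. $(T,s)$ realizes (satisfies) a set $D$ of integers if $D=\{sdeg(v):v\in V(T)\}$. For a set $D$ containing $1$ or $-1$, $diam(D)=\min\{diam(T): \text{some signed tree }(T,s)\text{ realizes }D\}$, where $diam(T)$ is the diameter of the tree $T$. *)

From mathcomp Require Import all_boot all_order all_algebra.
Set Implicit Arguments. Unset Strict Implicit. Unset Printing Implicit Defensive.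
Import Order.TTheory GRing.Theory Num.Theory.

Definition simple_graph (m : nat) (e : rel 'I_m) : Prop :=
  (forall x y, e x y = e y x) /\ (forall x, ~~ e x x).

Definition is_tree (m : nat) (e : rel 'I_m) : Prop :=
  0 < m /\ simple_graph e /\
  (forall x y, connect e x y) /\
  (forall p : seq 'I_m, 3 <= size p -> uniq p -> ~~ cycle e p).

(* A sign function on edges: s x y = true means the edge xy is positive.
   It must be symmetric, so that it is a function of the (unordered) edge. *)
Definition edge_sign (m : nat) (s : rel 'I_m) : Prop :=
  forall x y, s x y = s y x.

Definition sdeg (m : nat) (e s : rel 'I_m) (v : 'I_m) : int :=
  (#|[set u | e v u && s v u]|%:Z - #|[set u | e v u && ~~ s v u]|%:Z)%R.

Definition realizes (m : nat) (e s : rel 'I_m) (D : int -> Prop) : Prop :=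
  forall z, D z <-> exists v, sdeg e s v = z.

Fixpoint ball (m : nat) (e : rel 'I_m) (k : nat) (x : 'I_m) : {set 'I_m} :=
  match k with
  | 0 => [set x]
  | k.+1 => ball e k x :|: [set y | [exists z in ball e k x, e z y]]
  end.

Definition is_graph_diam (m : nat) (e : rel 'I_m) (d : nat) : Prop :=
  (forall x y, y \in ball e d x) /\
  (forall k, (forall x y, y \in ball e k x) -> d <= k).

Definition signed_tree_realizing (m : nat) (e s : rel 'I_m) (D : int -> Prop) :=
  is_tree e /\ edge_sign s /\ realizes e s D.

Definition is_diamD (D : int -> Prop) (d : nat) : Prop :=
  (exists (m : nat) (e s : rel 'I_m),
      signed_tree_realizing e s D /\ is_graph_diam e d) /\
  (forall (m : nat) (e s : rel 'I_m) (d' : nat),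
      signed_tree_realizing e s D -> is_graph_diam e d' -> d <= d').

(* A vertex of signed degree x_i >= 2 has at least two neighbours. In a tree a shortest walk
   is a path and paths are unique, so a path with k edges forces diameter >= k. One such vertex
   is the middle of a path with 2 edges; for two of them, u and v, the u-v path extended by one
   more edge at each end has at least 3 edges; and since a tree has no triangle, two of three
   such vertices are non-adjacent, which gives 4 edges.
   Trees of depth two attain these bounds: for n = 1 a star with x_1 positive edges; for n = 2 a
   star with x_1 positive edges one of whose leaves carries x_2 - 1 further positive leaves; for
   n > 2 a root joined by negative edges to n vertices carrying x_i + 1 positive leaves each,
   and by positive edges to n + 1 leaves, so that the root itself has signed degree 1. *)

From mathcomp Require Import all_boot all_order all_algebra.
From mathcomp Require Import zify.
Import Order.TTheory GRing.Theory Num.Theory.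
Set Implicit Arguments. Unset Strict Implicit. Unset Printing Implicit Defensive.

Section AcyclicPaths.
Variables (T : eqType) (e : rel T).
Hypothesis e_sym : symmetric e.

Lemma rev_belast_path x p : path e x p -> path e (last x p) (rev (belast x p)).
Proof. by rewrite rev_path; apply: sub_path => a b; rewrite e_sym. Qed.

Lemma sorted_rev_sym s : sorted e (rev s) = sorted e s.
Proof. by rewrite rev_sorted; apply: eq_sorted => x y; rewrite e_sym. Qed.

Definition acyclic := forall p : seq T, 3 <= size p -> uniq p -> ~~ cycle e p.
Hypothesis e_acyclic : acyclic.

(* If p and q leave x by different edges, a return of p to q would close a cycle. *)
Lemma acyclic_paths_disjoint x p q :
    path e x q -> uniq (x :: q) -> path e x p -> uniq (x :: p) ->
  p != [::] -> head x p != head x q -> ~~ has (mem q) p.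
Proof.
move=> pq uq; elim/last_ind: p => [//|p1 y IH] pp up _ hd.
rewrite has_rcons negb_or; move: pp; rewrite rcons_path => /andP[pp1 ey].
have up1 : uniq (x :: p1) by move: up; rewrite -rcons_cons rcons_uniq => /andP[].
have p1q : ~~ has (mem q) p1.
  by case: p1 {ey up} IH pp1 up1 hd => // a p1 IH pp1 up1 hd; apply: IH.
rewrite p1q andbT; apply/negP => yq; move: yq => /splitPr[q1 q2] in pq uq p1q hd *.
move: pq; rewrite cat_path /= => /and3P[pq1 eq1 _].
have: cycle e (x :: p1 ++ y :: rev q1).
  rewrite /= rcons_cat cat_path pp1 /= ey.
  have := @rev_belast_path x (rcons q1 y).
  by rewrite rcons_path pq1 eq1 belast_rcons last_rcons rev_cons; apply; rewrite ?e_sym.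
apply/negP/e_acyclic.
  rewrite /= size_cat /= size_rev.
  case: (p1) hd => [|a p1'] /=; last by lia.
  by case: (q1) => [|b q1'] /=; [rewrite eqxx | lia].
have -> : uniq (x :: p1 ++ y :: rev q1) = uniq ((x :: rcons p1 y) ++ q1).
  apply: perm_uniq; rewrite /= perm_cons -cats1 -catA perm_cat2l /=.
  by rewrite perm_cons perm_rev.
rewrite cat_uniq up; move: uq; rewrite /= mem_cat negb_or cat_uniq.
move=> /andP[/andP[xq1 _] /and3P[-> yq1 _]].
rewrite andbT; apply/hasPn => z zq1; rewrite /= in_cons mem_rcons in_cons.
apply/negP => /or3P[/eqP zx | /eqP zy | zp1].
- by rewrite -zx zq1 in xq1.
- by move/hasPn: yq1 => /(_ y (mem_head _ _)); rewrite -zy zq1.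
- by move/hasPn: p1q => /(_ z zp1); rewrite /= mem_cat zq1.
Qed.

Lemma acyclic_path_uniq x p q : path e x p -> path e x q ->
  uniq (x :: p) -> uniq (x :: q) -> last x p = last x q -> p = q.
Proof.
elim: p x q => [|a p IH] x [|b q] //=.
- by move=> _ _ _ /andP[xq _] lq; move: (mem_last b q); rewrite -lq (negbTE xq).
- by move=> _ _ /andP[xp _] _ lp; move: (mem_last a p); rewrite lp (negbTE xp).
move=> /andP[xa pa] /andP[xb qb] up uq l.
have [eq_ab|ab] := eqVneq a b.
  move: eq_ab xb qb uq l => <- _ qa uq l.
  by rewrite (IH a q) //; [case/andP: up | case/andP: uq].
have := @acyclic_paths_disjoint x (a :: p) (b :: q).
rewrite /= xa xb pa qb ab up uq => /(_ isT isT isT isT isT isT) /negP[].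
change (has (mem (b :: q)) (a :: p)).
by apply/hasP; exists (last a p); [exact: mem_last | rewrite inE l mem_last].
Qed.

Hypothesis e_irr : irreflexive e.

Lemma acyclic_path_cons x p y : path e x p -> uniq (x :: p) -> p != [::] ->
  e y x -> y != head x p -> uniq (y :: x :: p).
Proof.
move=> pp up pn eyx yh.
have yx : y != x by apply: contraTneq eyx => ->; rewrite e_irr.
rewrite cons_uniq up andbT in_cons negb_or yx /=.
apply/negP => yp; move: yp => /splitPr[p1 p2] in pp up yh *.
have : rcons p1 y = [:: y].
  apply: (@acyclic_path_uniq x); rewrite ?last_rcons //=.
  - by move: pp; rewrite -cat_rcons cat_path => /andP[].
  - by rewrite e_sym eyx.
  - by move: up; rewrite -cat_rcons -cat_cons cat_uniq => /andP[].
  - by rewrite inE eq_sym yx.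
by case: p1 {pp up} yh => [|a [|b p1]] //=; rewrite eqxx.
Qed.

End AcyclicPaths.

Section Balls.
Variables (m : nat) (e : rel 'I_m).

Lemma ballP k x y :
  y \in ball e k x <-> exists p, [/\ path e x p, last x p = y & size p <= k].
Proof.
elim: k y => [|k IH] y /=.
  rewrite in_set1; split=> [/eqP->|[[|a p] [] //= _ <-//]]; by exists [::].
rewrite in_setU inE; split.
  case/orP => [/IH[p [pp lp sp]]|/existsP[z /andP[/IH[p [pp lp sp]] ezy]]].
    by exists p; split=> //; apply: leqW.
  by exists (rcons p y); rewrite rcons_path pp lp ezy last_rcons size_rcons.
case=> p [pp lp sp]; have [short|long] := leqP (size p) k.
  by apply/orP; left; apply/IH; exists p.
apply/orP; right; apply/existsP; case/lastP: p pp lp sp long => [//|p a].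
rewrite rcons_path last_rcons size_rcons ltnS => /andP[pp ea] <- sp _.
by exists (last x p); rewrite ea andbT; apply/IH; exists p.
Qed.

Lemma ball_refl k x : x \in ball e k x.
Proof. by apply/ballP; exists [::]. Qed.

Lemma ball_path x p : path e x p -> last x p \in ball e (size p) x.
Proof. by move=> pp; apply/ballP; exists p. Qed.

Lemma ball_le i j x y : i <= j -> y \in ball e i x -> y \in ball e j x.
Proof.
by move=> ij /ballP[p [pp lp sp]]; apply/ballP; exists p; split=> //; apply: leq_trans ij.
Qed.

Lemma ball_trans i j x y z :
  y \in ball e i x -> z \in ball e j y -> z \in ball e (i + j) x.
Proof.
move=> /ballP[p [pp lp sp]] /ballP[q [pq lq sq]]; apply/ballP; exists (p ++ q).
by rewrite cat_path pp last_cat lp pq lq size_cat leq_add.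
Qed.

Hypothesis e_sym : symmetric e.

Lemma ball_sym i x y : y \in ball e i x -> x \in ball e i y.
Proof.
move=> /ballP[p [pp <- sp]]; apply/ballP; exists (rev (belast x p)).
rewrite rev_belast_path // size_rev size_belast; split=> //.
by case: p {pp sp} => [|a p] //=; rewrite rev_cons last_rcons.
Qed.

Definition diam_le k := forall x y, y \in ball e k x.

Lemma diam_le_cover c1 c2 r d : c2 \in ball e d c1 ->
  (forall a, a \in ball e r c1 \/ a \in ball e r c2) -> diam_le (r + d + r).
Proof.
move=> c12 cover a b; have r_le : r + r <= r + d + r by rewrite leq_add2r leq_addr.
case: (cover a) => /ball_sym ha; case: (cover b) => hb.
- exact: ball_le r_le (ball_trans ha hb).
- exact: ball_trans (ball_trans ha c12) hb.
- exact: ball_trans (ball_trans ha (ball_sym c12)) hb.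
- exact: ball_le r_le (ball_trans ha hb).
Qed.

Hypothesis e_acyclic : acyclic e.

Lemma simple_path_size_le s k : sorted e s -> uniq s -> diam_le k -> size s <= k.+1.
Proof.
case: s => [//|x p] /= pp up /(_ x (last x p)) /ballP[w [pw + sw]].
case: (shortenP pw) => w' pw' uw' sub_w lw'.
rewrite (acyclic_path_uniq e_sym e_acyclic pp pw' up uw' (esym lw')) ltnS.
by apply: leq_trans sw; apply: uniq_leq_size => //; case/andP: uw'.
Qed.

End Balls.

Definition branching (T : eqType) (e : rel T) (u : T) := forall c, exists2 a, e u a & a != c.

Lemma sdeg_branching m (e s : rel 'I_m) v : (2 <= sdeg e s v)%R -> branching e v.
Proof.
rewrite /sdeg => sdeg_ge2 c; set A := [set u | e v u && s v u] in sdeg_ge2.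
have : 0 < #|A :\ c| by rewrite (cardsD1 c A) in sdeg_ge2; case: (c \in A) sdeg_ge2 => /=; lia.
by case/card_gt0P => a; rewrite !inE => /andP[ac /andP[eva _]]; exists a.
Qed.

Section TreeDiameter.
Variables (m : nat) (e : rel 'I_m).
Hypothesis e_tree : is_tree e.

Let e_sym : symmetric e. Proof. by case: e_tree => _ [[+ _] _]. Qed.
Let e_irr : irreflexive e. Proof. by case: e_tree => _ [[_ irr] _] x; exact/negbTE/irr. Qed.
Let e_acyclic : acyclic e. Proof. by case: e_tree => _ [_ []]. Qed.
Let e_connect x y : connect e x y. Proof. by case: e_tree => _ [_ [+ _]]. Qed.

Lemma branching_path_cons u p : path e u p -> uniq (u :: p) -> p != [::] ->
  branching e u -> exists y, path e y (u :: p) && uniq (y :: u :: p).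
Proof.
move=> pp up pn /(_ (head u p))[y uy yh]; exists y.
have yu : e y u by rewrite e_sym.
by rewrite (acyclic_path_cons e_sym e_acyclic e_irr) //= yu pp.
Qed.

Lemma diam_ge_branching v k : branching e v -> diam_le e k -> 2 <= k.
Proof.
move=> bv dk; have [a va _] := bv v.
have uva : uniq [:: v; a] by rewrite /= inE andbT; apply: contraTneq va => <-; rewrite e_irr.
have pva : path e v [:: a] by rewrite /= va.
have [y /andP[py uy]] := branching_path_cons pva uva isT bv.
exact: (simple_path_size_le e_sym e_acyclic (s := [:: y; v; a]) py uy dk).
Qed.

Lemma diam_ge_branching_pair u v k : u != v -> branching e u -> branching e v ->
  diam_le e k -> (~~ e u v) + 3 <= k.
Proof.
move=> uv bu bv dk; have /connectP[p0 pp0] := e_connect u v.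
case: (shortenP pp0) => P pP uP _ lP {p0 pp0}.
have Pn : P != [::] by apply: contraNneq uv => P0; rewrite lP P0.
have sizeP : (~~ e u v) < size P.
  case: (P) pP lP Pn => [|w [|w2 P']] //=; last by case: (e u v).
  by move=> /andP[uw _] -> _; rewrite uw.
have [y /andP[pyP uyP]] := branching_path_cons pP uP Pn bu.
set r := rev (belast y (u :: P)).
have rev_yuP : rev (y :: u :: P) = v :: r by rewrite lastI rev_rcons lP.
have pvr : path e v r by rewrite -[path _ _ _]/(sorted e (v :: r)) -rev_yuP sorted_rev_sym.
have uvr : uniq (v :: r) by rewrite -rev_yuP rev_uniq.
have rn : r != [::] by rewrite -size_eq0 size_rev size_belast.
have [z /andP[pz uz]] := branching_path_cons pvr uvr rn bv.
have := simple_path_size_le e_sym e_acyclic (s := [:: z, v & r]) pz uz dk.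
by rewrite /= size_rev size_belast; move: sizeP; case: (~~ e u v) => /=; lia.
Qed.

Lemma diam_ge_branching_triple u v w k : u != v -> v != w -> u != w ->
  branching e u -> branching e v -> branching e w -> diam_le e k -> 4 <= k.
Proof.
move=> uv vw uw bu bv bw dk.
have far a b : a != b -> branching e a -> branching e b -> ~~ e a b -> 4 <= k.
  by move=> ab ba bb /negbTE nab; have := diam_ge_branching_pair ab ba bb dk; rewrite nab.
have [euv|] := boolP (e u v); last exact: far.
have [evw|] := boolP (e v w); last exact: far.
have [euw|] := boolP (e u w); last exact: far.
have := e_acyclic (p := [:: u; v; w]) isT.
by rewrite /= !inE negb_or uv uw vw euv evw e_sym euw => /(_ isT).
Qed.

End TreeDiameter.

Definition degree_set n (x : 'I_n -> int) (z : int) : Prop := z = 1%R \/ exists i, z = x i.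

Lemma degree_set_diam_ge n (x : 'I_n -> int) m (e s : rel 'I_m) k :
    0 < n -> injective x -> (forall i, (1 < x i)%R) ->
  signed_tree_realizing e s (degree_set x) -> diam_le e k -> minn n.+1 4 <= k.
Proof.
move=> n_gt0 x_inj x_gt1 [tree [_ real]] dk.
have vert i : exists2 v, sdeg e s v = x i & branching e v.
  have [v sv] := (real (x i)).1 (or_intror (ex_intro _ i erefl)).
  by exists v => //; apply: (sdeg_branching (s := s)); rewrite sv; have := x_gt1 i; lia.
have vert_neq i j v w : i != j -> sdeg e s v = x i -> sdeg e s w = x j -> v != w.
  by move=> ij sv sw; apply: contraNneq ij => vw; apply/eqP/x_inj; rewrite -sv -sw vw.
case: n x x_inj x_gt1 real vert vert_neq n_gt0 => [|[|[|n]]] x _ _ _ vert vert_neq // _.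
- have [v _ bv] := vert ord0.
  exact: leq_trans (geq_minl _ _) (diam_ge_branching tree bv dk).
- have [u su bu] := vert ord0; have [v sv bv] := vert ord_max.
  apply: leq_trans (geq_minl _ _) (leq_trans _ (diam_ge_branching_pair tree _ bu bv dk)).
    exact: leq_addl.
  exact: vert_neq su sv.
- have [u su bu] := vert ord0; have [v sv bv] := vert (lift ord0 ord0).
  have [w sw bw] := vert ord_max.
  apply: leq_trans (geq_minr _ _) (diam_ge_branching_triple tree _ _ _ bu bv bw dk).
  - exact: vert_neq su sv.
  - exact: vert_neq sv sw.
  - exact: vert_neq su sw.
Qed.

Lemma degree_set_ord1 (x : 'I_1 -> int) z :
  degree_set x z <-> [\/ z = 1, z = x ord0 | z = 1]%R.
Proof.
rewrite /degree_set; split=> [[->|[i ->]]|[->|->|->]]; rewrite ?(ord1 i).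
all: by [constructor | right; exists ord0 | left].
Qed.

Lemma degree_set_ord2 (x : 'I_2 -> int) z :
  degree_set x z <-> [\/ z = 1, z = x ord0 | z = x ord_max]%R.
Proof.
rewrite /degree_set; split=> [[->|[i ->]]|[->|->|->]]; try by [constructor 1 | left].
- have [->|->] : i = ord0 \/ i = ord_max.
    by case: i => -[|[|//]] i_lt; [left | right]; apply: val_inj.
  + by constructor 2.
  + by constructor 3.
- by right; exists ord0.
- by right; exists ord_max.
Qed.

Lemma card_set_inj (A B : finType) (f : A -> B) (P : pred B) : injective f ->
  (forall b, P b -> b \in codom f) -> #|[set b | P b]| = #|[set a | P (f a)]|.
Proof.
move=> f_inj Pf; rewrite -(card_imset _ f_inj); apply: eq_card => b; rewrite inE.
apply/idP/imsetP => [Pb|[a]]; last by rewrite inE => Pa ->.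
by have /codomP[a eq_b] := Pf b Pb; exists a; rewrite // inE -eq_b.
Qed.

Section RootedTrees.
Variables (T : finType) (e : rel T) (root : T) (parent : T -> T) (depth : T -> nat).
Hypothesis e_sym : symmetric e.
Hypothesis parent_edge : forall x, x != root -> e x (parent x) && (depth (parent x) < depth x).
Hypothesis edge_parent : forall x y, e x y ->
  (y == parent x) && (depth y < depth x) || (x == parent y) && (depth x < depth y).

Lemma rooted_irr : irreflexive e.
Proof. by move=> x; apply/negP => /edge_parent; rewrite ltnn !andbF. Qed.

Lemma rooted_connect x y : connect e x y.
Proof.
suff to_root z : connect e z root.
  by apply: connect_trans (to_root x) _; rewrite (sym_connect_sym e_sym) to_root.
elim: {z}(depth z) {-2}z (leqnn (depth z)) => [|d IH] z dz.
  have [->|/parent_edge/andP[_]] := eqVneq z root; first exact: connect0.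
  by rewrite ltnNge; move: dz; rewrite leqn0 => /eqP ->.
have [->|/parent_edge/andP[ez lt_z]] := eqVneq z root; first exact: connect0.
by apply: connect_trans (connect1 ez) (IH _ _); rewrite -ltnS (leq_trans lt_z).
Qed.

(* In a cycle, both neighbours of a vertex of maximal depth would have to be its parent. *)
Lemma rooted_acyclic : acyclic e.
Proof.
move=> p size_p uniq_p; apply/negP => cycle_p.
have [x0 x0p] : exists x0, x0 \in p.
  by case: p size_p {uniq_p cycle_p} => // a p _; exists a; rewrite inE eqxx.
have [w wp w_max] := @arg_maxnP _ _ (fun z => z \in p) depth x0p.
have [i p' rot_p] := rot_to wp.
have : cycle e (w :: p') by rewrite -rot_p rot_cycle.
have : uniq (w :: p') by rewrite -rot_p rot_uniq.
have : 2 <= size p' by move: size_p; rewrite -(size_rot i p) rot_p.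
have le_w z : z \in p' -> depth z <= depth w.
  by move=> zp; apply: w_max; rewrite -(mem_rot i) rot_p inE zp orbT.
case: p' {rot_p} le_w => [|a [|b p'']] // le_w _.
rewrite /= rcons_path => /andP[_ /andP[ap _]] /and3P[ewa _ /andP[_ ebw]].
have first_parent : a = parent w.
  move: (edge_parent ewa) => /orP[/andP[/eqP //]|/andP[_ lt_wa]].
  by have := le_w a; rewrite inE eqxx => /(_ isT); rewrite leqNgt lt_wa.
have last_parent : last b p'' = parent w.
  move: (edge_parent ebw) => /orP[/andP[_ lt_wl]|/andP[/eqP // _]].
  by have := le_w (last b p''); rewrite inE mem_last orbT => /(_ isT); rewrite leqNgt lt_wl.
by move: ap; rewrite first_parent -last_parent mem_last.
Qed.

End RootedTrees.

Section Relabel.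
Variable T : finType.
Implicit Types (e s : rel T) (D : int -> Prop).

Definition relabel e : rel 'I_#|T| := fun x y => e (enum_val x) (enum_val y).

Definition sdegT e s (v : T) : int :=
  (#|[set u | e v u && s v u]|%:Z - #|[set u | e v u && ~~ s v u]|%:Z)%R.

Lemma sdeg_relabel e s v : sdeg (relabel e) (relabel s) v = sdegT e s (enum_val v).
Proof.
have enum_val_onto t : t \in codom (enum_val : 'I_#|T| -> T).
  by rewrite -[t in t \in _]enum_rankK codom_f.
by rewrite /sdegT !(card_set_inj enum_val_inj (fun t _ => enum_val_onto t)).
Qed.

Lemma realizes_relabel e s D :
  (forall z, D z <-> exists t, sdegT e s t = z) -> realizes (relabel e) (relabel s) D.
Proof.
move=> D_sdeg z; rewrite D_sdeg; split=> [[t <-]|[v <-]].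
  by exists (enum_rank t); rewrite sdeg_relabel enum_rankK.
by exists (enum_val v); rewrite sdeg_relabel.
Qed.

Lemma path_relabel e x p : path (relabel e) (enum_rank x) (map enum_rank p) = path e x p.
Proof. by rewrite path_map; apply: eq_path => y z; rewrite /relabel /= !enum_rankK. Qed.

Lemma ball_relabel e x p :
  path e x p -> enum_rank (last x p) \in ball (relabel e) (size p) (enum_rank x).
Proof.
by rewrite -path_relabel => /ball_path; rewrite size_map (last_map enum_rank).
Qed.

Lemma relabel_tree e (x0 : T) : symmetric e -> irreflexive e ->
  (forall x y, connect e x y) -> acyclic e -> is_tree (relabel e).
Proof.
move=> e_sym e_irr e_conn e_acyc; split; first by apply/card_gt0P; exists x0.
split; first by split=> [x y|x]; rewrite /relabel /= ?e_irr // e_sym.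
split=> [x y|p size_p uniq_p].
  have /connectP[p pp ey] := e_conn (enum_val x) (enum_val y).
  apply/connectP; exists (map enum_rank p); first by rewrite -[x]enum_valK path_relabel.
  by rewrite -[x]enum_valK (last_map enum_rank) -ey enum_valK.
by rewrite /relabel -cycle_map e_acyc ?size_map ?(map_inj_uniq enum_val_inj).
Qed.

End Relabel.

(* The rooted tree of depth two with a middle vertex for each j : I, joined to the root by an
   edge of sign sg j and carrying L j positive leaves. *)
Module TwoLevel.
Section TwoLevel.
Variables (I : finType) (L : I -> nat) (sg : I -> bool).

Definition vertex : finType := option (I + {j : I & 'I_(L j)}).
Definition root : vertex := None.
Definition mid j : vertex := Some (inl j).
Definition leaf j (t : 'I_(L j)) : vertex := Some (inr (Tagged _ t)).

Definition edge (x y : vertex) : bool :=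
  match x, y with
  | None, Some (inl _) | Some (inl _), None => true
  | Some (inl j), Some (inr p) | Some (inr p), Some (inl j) => tag p == j
  | _, _ => false
  end.

Definition sign (x y : vertex) : bool :=
  match x, y with
  | None, Some (inl j) | Some (inl j), None => sg j
  | _, _ => true
  end.

Definition parent (x : vertex) : vertex :=
  if x is Some (inr p) then mid (tag p) else root.

Definition depth (x : vertex) : nat :=
  match x with None => 0 | Some (inl _) => 1 | Some (inr _) => 2 end.

Lemma edge_sym : symmetric edge.
Proof. by case=> [[j|p]|] [[j'|p']|]. Qed.

Lemma sign_sym : symmetric sign.
Proof. by case=> [[j|p]|] [[j'|p']|]. Qed.

Lemma parent_edge x : x != root -> edge x (parent x) && (depth (parent x) < depth x).
Proof. by case: x => [[j|p]|] //= _; rewrite eqxx. Qed.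

Lemma edge_parent x y : edge x y ->
  (y == parent x) && (depth y < depth x) || (x == parent y) && (depth x < depth y).
Proof. by case: x y => [[j|[j t]]|] [[j'|[j' t']]|] //= /eqP->; rewrite eqxx ?orbT. Qed.

Lemma relabel_is_tree : is_tree (relabel edge).
Proof.
exact: relabel_tree root edge_sym (rooted_irr edge_parent)
  (rooted_connect edge_sym parent_edge) (rooted_acyclic edge_parent).
Qed.

Lemma relabel_edge_sym : symmetric (relabel edge).
Proof. by move=> x y; rewrite /relabel /= edge_sym. Qed.

Lemma relabel_realizing D : (forall z, D z <-> exists t, sdegT edge sign t = z) ->
  signed_tree_realizing (relabel edge) (relabel sign) D.
Proof.
split; first exact: relabel_is_tree.
split; last exact: realizes_relabel.
by move=> x y; rewrite /relabel /= sign_sym.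
Qed.

Lemma ball_root k t : depth t <= k -> enum_rank t \in ball (relabel edge) k (enum_rank root).
Proof.
move/ball_le; apply; case: t => [[j|p]|].
- exact: (@ball_relabel _ edge root [:: mid j]).
- by have := @ball_relabel _ edge root [:: mid (tag p); Some (inr p)]; rewrite /= eqxx; apply.
- exact: (@ball_relabel _ edge root [::]).
Qed.

Lemma sdeg_root : sdegT edge sign root = (#|[set j | sg j]|%:Z - #|[set j | ~~ sg j]|%:Z)%R.
Proof.
have mid_inj : injective mid by move=> j j' [].
by rewrite /sdegT !(card_set_inj mid_inj) // => -[[j|p]|] // _; rewrite codom_f.
Qed.

Lemma sdeg_leaf j t : sdegT edge sign (@leaf j t) = 1%R.
Proof.
rewrite /sdegT (_ : [set u | _] = [set mid j]); last first.
  by apply/setP => -[[j'|p]|]; rewrite !inE //= andbT eq_sym.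
rewrite (_ : [set u | _] = set0) ?cards1 ?cards0 //.
by apply/setP => -[[j'|p]|]; rewrite !inE //= andbF.
Qed.

Lemma sdeg_mid j : sdegT edge sign (mid j) = ((L j)%:Z + (if sg j then 1 else -1))%R.
Proof.
have leaf_inj : injective (@leaf j) by move=> t t' [] eq_t; apply: eq_from_Tagged eq_t.
have leaf_onto b : edge (mid j) b && (b != root) -> b \in codom (@leaf j).
  by case: b => [[j'|[j'' t]]|] //= /andP[/eqP eq_j _]; subst j''; rewrite codom_f.
have card_leaves : #|[set t : 'I_(L j) | edge (mid j) (leaf t) && (leaf t != root)]| = L j.
  by rewrite -[RHS](card_ord (L j)); apply: eq_card => t; rewrite inE /= eqxx.
have [sgj|sgj] := boolP (sg j); rewrite /sdegT.
- rewrite (_ : [set u | _ && ~~ _] = set0) ?cards0; last first.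
    by apply/setP => -[[j'|p]|]; rewrite !inE //= ?sgj ?andbF.
  rewrite (_ : [set u | _] = root |: [set u | edge (mid j) u && (u != root)]); last first.
    by apply/setP => -[[j'|p]|]; rewrite !inE //= ?sgj ?andbT.
  by rewrite cardsU1 inE eqxx andbF (card_set_inj leaf_inj leaf_onto) card_leaves //; lia.
- rewrite (_ : [set u | _ && ~~ _] = [set root]) ?cards1; last first.
    by apply/setP => -[[j'|p]|]; rewrite !inE //= ?sgj ?andbF.
  rewrite (_ : [set u | _] = [set u | edge (mid j) u && (u != root)]); last first.
    by apply/setP => -[[j'|p]|]; rewrite !inE //= (negbTE sgj) ?andbT.
  by rewrite (card_set_inj leaf_inj leaf_onto) card_leaves //; lia.
Qed.

End TwoLevel.

Arguments root {I} L.
Arguments mid {I} L j.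
Arguments edge {I} L x y.
Arguments sign {I} L sg x y.
Arguments relabel_edge_sym {I L}.
End TwoLevel.

Lemma card_set_true (T : finType) : #|[set _ : T | true]| = #|T|.
Proof. by rewrite -cardsT. Qed.

Lemma double_star_realizing (a b : int) (D : int -> Prop) : (1 < a)%R -> (0 < b)%R ->
    (forall z, D z <-> [\/ z = 1, z = a | z = b])%R ->
  exists m (e s : rel 'I_m),
    signed_tree_realizing e s D /\ diam_le e (if b == 1%R then 2 else 3).
Proof.
move=> a_gt1 b_gt0 D_eq; have na_gt1 : 1 < absz a by lia.
pose j0 : 'I_(absz a) := Ordinal (ltnW na_gt1); pose j1 : 'I_(absz a) := Ordinal na_gt1.
pose L j := if j == j0 then (absz b).-1 else 0; pose sg (j : 'I_(absz a)) := true.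
exists _, (relabel (TwoLevel.edge L)), (relabel (TwoLevel.sign L sg)); split.
  apply: TwoLevel.relabel_realizing => z; rewrite D_eq; split.
  - case=> ->.
    + by exists (TwoLevel.mid L j1); rewrite TwoLevel.sdeg_mid.
    + exists (TwoLevel.root L); rewrite TwoLevel.sdeg_root /sg /=.
      by rewrite card_set_true cards0 card_ord; lia.
    + by exists (TwoLevel.mid L j0); rewrite TwoLevel.sdeg_mid /L eqxx /=; lia.
  - case=> -[[j|[j t]]|] <-.
    + rewrite TwoLevel.sdeg_mid /L /=; case: eqP => _; last by constructor 1.
      by constructor 3; lia.
    + by constructor 1; rewrite TwoLevel.sdeg_leaf.
    + constructor 2; rewrite TwoLevel.sdeg_root /sg /=.
      by rewrite card_set_true cards0 card_ord; lia.
have leaf_j0 j : 'I_(L j) -> j = j0 by rewrite /L; case: eqP => // _ [].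
case: eqP => [b1|_].
- have := ball_refl (relabel (TwoLevel.edge L)) 0 (enum_rank (TwoLevel.root L)).
  move/(diam_le_cover TwoLevel.relabel_edge_sym (r := 1)); apply=> x; left.
  rewrite -[x]enum_valK; apply: TwoLevel.ball_root.
  case: (enum_val x) => [[j|[j t]]|] //.
  have j_j0 := leaf_j0 j t; subst j.
  by have := ltn_ord t; rewrite [in X in _ < X]/L eqxx b1.
- have := TwoLevel.ball_root (t := TwoLevel.mid L j0) (leqnn 1).
  move/(diam_le_cover TwoLevel.relabel_edge_sym (r := 1)); apply=> x.
  rewrite -[x]enum_valK; case: (enum_val x) => [[j|[j t]]|]; try by left; apply: TwoLevel.ball_root.
  right; have j_j0 := leaf_j0 j t; subst j.
  by have := @ball_relabel _ (TwoLevel.edge L) (TwoLevel.mid L j0) [:: TwoLevel.leaf t]; apply.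
Qed.

Lemma spider_realizing n (x : 'I_n -> int) : (forall i, (1 < x i)%R) ->
  exists m (e s : rel 'I_m), signed_tree_realizing e s (degree_set x) /\ diam_le e 4.
Proof.
move=> x_gt1; pose L (j : 'I_n + 'I_n.+1) := if j is inl i then (absz (x i)).+1 else 0.
pose sg (j : 'I_n + 'I_n.+1) := if j is inr _ then true else false.
have root_sdeg : sdegT (TwoLevel.edge L) (TwoLevel.sign L sg) (TwoLevel.root L) = 1%R.
  have inl_inj : injective (@inl 'I_n 'I_n.+1) by move=> i i' [].
  have inr_inj : injective (@inr 'I_n 'I_n.+1) by move=> i i' [].
  rewrite TwoLevel.sdeg_root (card_set_inj inr_inj) ?(card_set_inj inl_inj).
  - by rewrite /sg /= !card_set_true !card_ord; lia.
  - by case=> // i _; rewrite codom_f.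
  - by case=> // i _; rewrite codom_f.
exists _, (relabel (TwoLevel.edge L)), (relabel (TwoLevel.sign L sg)); split.
  apply: TwoLevel.relabel_realizing => z; split.
  - case=> [->|[i ->]]; first by exists (TwoLevel.root L).
    exists (TwoLevel.mid L (inl i)); rewrite TwoLevel.sdeg_mid /L /sg /=.
    by have := x_gt1 i; lia.
  - case=> -[[[i|i]|[j t]]|] <-.
    + right; exists i; rewrite TwoLevel.sdeg_mid /L /sg /=.
      by have := x_gt1 i; lia.
    + by left; rewrite TwoLevel.sdeg_mid.
    + by left; rewrite TwoLevel.sdeg_leaf.
    + by left.
have := ball_refl (relabel (TwoLevel.edge L)) 0 (enum_rank (TwoLevel.root L)).
move/(diam_le_cover TwoLevel.relabel_edge_sym (r := 2)); apply=> v; left.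
by rewrite -[v]enum_valK; apply: TwoLevel.ball_root; case: (enum_val v) => [[j|p]|].
Qed.

Lemma is_diamD_intro (D : int -> Prop) d :
    (exists m (e s : rel 'I_m), signed_tree_realizing e s D /\ diam_le e d) ->
    (forall m (e s : rel 'I_m) k, signed_tree_realizing e s D -> diam_le e k -> d <= k) ->
  is_diamD D d.
Proof.
move=> [m [e [s [real dd]]]] lower; split.
  by exists m, e, s; split=> //; split=> // k /(lower _ _ _ _ real).
by move=> m' e' s' d' real' [/(lower _ _ _ _ real')].
Qed.

Theorem mainTheorem2 (n : nat) (x : 'I_n -> int) :
  1 <= n -> injective x -> (forall i, (1 < x i)%R) ->
  let D := fun z : int => z = 1%R \/ exists i, z = x i in
  (n = 1 -> is_diamD D 2) /\
  (n = 2 -> is_diamD D 3) /\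
  (2 < n -> is_diamD D 4).
Proof.
move=> n_gt0 x_inj x_gt1 D.
have lower m (e s : rel 'I_m) k : signed_tree_realizing e s D -> diam_le e k -> minn n.+1 4 <= k.
  exact: degree_set_diam_ge n_gt0 x_inj x_gt1.
split; [|split] => n_eq.
- subst n; apply: is_diamD_intro lower.
  have := double_star_realizing (D := D) (x_gt1 ord0) ltr01.
  by rewrite eqxx; apply=> z; apply: degree_set_ord1.
- subst n; apply: is_diamD_intro lower.
  have := double_star_realizing (D := D) (x_gt1 ord0) (lt_trans ltr01 (x_gt1 ord_max)).
  by rewrite gt_eqF ?x_gt1 //; apply=> z; apply: degree_set_ord2.
- apply: is_diamD_intro (spider_realizing x_gt1) _ => m e s k real dk.
  by have := lower m e s k real dk; lia.
Qed.
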